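(* Let $\mathcal{N}$ be a Cassou-Nogu\`es ideal with $N=\#(\mathcal{O}/\mathcal{N})$, and let $U=\{u_1,\dots,u_r\}\subset\mathcal{O}$ be nonempty with each $u_j$ prime to $\mathcal{N}$. Then for every $x\in\mathcal{O}/\mathcal{N}$ and all integers $l_1,\dots,l_r\ge0$, $$\mathfrak{h}_U\Big(x+\sum_{j=1}^r l_ju_j\Big)=\mathfrak{h}_U(x)+\sum_{\emptyset\neq S\subseteq\{1,\dots,r\}}\ \sum_{\substack{0\le d_j<l_j\\ j\in S}}\mathfrak{h}_{U\setminus\{u_j\}_{j\in S}}\Big(x+\sum_{j\in S}d_ju_j\Big).$$
   Context: $F$ is a number field with ring of integers $\mathcal{O}$. A Cassou-Nogu\`es ideal is an integral ideal $\mathcal{N}\neq\mathcal{O}$ such that $\mathcal{O}/\mathcal{N}$ is cyclic as an additive group, i.e. $\mathcal{O}/\mathcal{N}\simeq\mathbf{Z}/N$ with $N=\#(\mathcal{O}/\mathcal{N})$. An element $u\in\mathcal{O}$ is prime to $\mathcal{N}$ if it is a unit modulo $\mathcal{N}$. For a nonempty $U=\{u_1,\dots,u_r\}\subset\mathcal{O}$, $\mathfrak{h}_U$ is the function on $\mathcal{O}/\mathcal{N}$ given by $\mathfrak{h}_U(a)=\frac{1}{N^{r-1}}\sum_{0\le d_1,\dots,d_r<N,\ d_1u_1+\dots+d_ru_r\equiv-a\bmod\mathcal{N}}d_1d_2\cdots d_r-\left(\frac{N-1}{2}\right)^r$, and $\mathfrak{h}_\emptyset(a)=N-1$ if $a\equiv0\bmod\mathcal{N}$,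 $\mathfrak{h}_\emptyset(a)=-1$ otherwise. *)

From HB Require Import structures.
From mathcomp Require Import all_boot all_order all_algebra.
Set Implicit Arguments. Unset Strict Implicit. Unset Printing Implicit Defensive.
Import Order.TTheory GRing.Theory Num.Theory.
Local Open Scope ring_scope.

(* The quotient O/N is modelled as a finite commutative ring A together with a
   surjective ring morphism pi : O -> A (the reduction map).  *)

Definition additively_cyclic (A : finComUnitRingType) : Prop :=
  exists g : A, forall a : A, exists k : nat, a = g *+ k.

(* h_I(a) for the subfamily (u_j)_{j in I} of u : 'I_r -> O, with N = #|A|. *)
Definition frak_h (O : comNzRingType) (A : finComUnitRingType)
  (pi : {rmorphism O -> A}) (r : nat) (u : 'I_r -> O) (I : {set 'I_r}) (a : A) : rat :=
  let N := #|A| in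
  if I == set0 then (if a == 0 then (N%:R - 1) else -1)
  else
    (N%:R ^+ (#|I|.-1))^-1 *
      (\sum_(d : {ffun 'I_r -> 'I_N} |
               [forall j, (j \notin I) ==> (val (d j) == 0%N)] &&
               (\sum_(j in I) pi (u j) *+ val (d j) == - a))
          (\prod_(j in I) (val (d j))%:R))
    - ((N%:R - 1) / 2) ^+ #|I|.

(* The heart of the argument is the difference equation
     h_I(a + u_k) = h_I(a) + h_{I \ k}(a)      for k in I.
   Since u_k is a unit and O/N is cyclic of order N, in the sum defining h_I the
   coordinate d_k is determined by the others.  Replacing a by a + u_k lowers
   that coordinate by one, except when it wraps around from 0 to N - 1; so the
   defining sum loses the full box sum (N(N-1)/2)^(|I|-1) and gains N times the
   sum defining h_{I \ k}, which normalises exactly to the equation above.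
   Iterating the equation l_j times along each coordinate and telescoping is
   then purely formal, and holds for any family satisfying it. *)

From HB Require Import structures.
From mathcomp Require Import all_boot all_order all_algebra all_fingroup all_solvable.
From mathcomp Require Import ring.
Import GRing.Theory Num.Theory FinRing.Theory.
Set Implicit Arguments. Unset Strict Implicit. Unset Printing Implicit Defensive.
Local Open Scope ring_scope.

Section FfunCoordinate.
Variables (I : finType) (M : nat).
Local Notation D := {ffun I -> 'I_M}.
Implicit Types (d : D) (k : I).

Definition fupd d k (e : 'I_M) : D :=
  [ffun j => if j == k then e else d j].

Lemma fupd_same d k e : fupd d k e k = e.
Proof. by rewrite ffunE eqxx. Qed.

Lemma fupd_other d k e j : j != k -> fupd d k e j = d j.
Proof. by rewrite ffunE => /negbTE ->. Qed.

Lemma sum_ffun_coord (V : nmodType) k (F : D -> V) :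
  \sum_(d : D) F d = \sum_(d : D | val (d k) == 0%N) \sum_(e : 'I_M) F (fupd d k e).
Proof.
rewrite exchange_big /= (partition_big (fun d : D => d k) predT) //=.
apply: eq_bigr => e _.
pose e0 : 'I_M := Ordinal (leq_ltn_trans (leq0n e) (ltn_ord e)).
rewrite (reindex_onto (fun d => fupd d k e) (fun d => fupd d k e0)) /=; last first.
  move=> d /eqP dk; apply/ffunP => j; rewrite ffunE.
  by case: eqVneq => [->|jk]; rewrite ?fupd_same ?fupd_other.
apply: eq_bigl => d; rewrite !fupd_same eqxx /=.
apply/eqP/eqP => [<-|dk0]; first by rewrite fupd_same.
apply/ffunP => j; rewrite ffunE; case: eqVneq => [->|jk]; last exact: fupd_other.
exact: val_inj.
Qed.

Lemma sum_ffun0 (V : nmodType) (M_gt0 : (0 < M)%N) (P : pred D) (F : D -> V) :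
  P =1 (fun d => [forall j, val (d j) == 0%N]) ->
  \sum_(d | P d) F d = F [ffun=> Ordinal M_gt0].
Proof.
move=> PE; apply: big_pred1 => d; rewrite PE.
apply/forallP/eqP => [d0|->]; last by move=> j; rewrite ffunE.
by apply/ffunP => j; rewrite ffunE; apply/val_inj/eqP.
Qed.

Lemma big_fupd (R : Type) (idx : R) (op : Monoid.com_law idx) (J : {set I}) k d e
    (G : I -> 'I_M -> R) : k \in J ->
  \big[op/idx]_(j in J) G j (fupd d k e j) = op (G k e) (\big[op/idx]_(j in J :\ k) G j (d j)).
Proof.
move=> kJ; rewrite (big_setD1 k kJ) fupd_same; congr (op _ _).
by apply: eq_bigr => j; rewrite !inE => /andP[jk _]; rewrite fupd_other.
Qed.

End FfunCoordinate.

Lemma sum_ord_rat n : \sum_(e < n) (e%:R : rat) = n%:R * (n%:R - 1) / 2.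
Proof.
elim: n => [|n IHn]; first by rewrite big_ord0 !mul0r.
by rewrite big_ord_recr /= IHn -natr1; field.
Qed.

Section CyclicRing.
Variable A : finComUnitRingType.
Hypothesis A_cyc : additively_cyclic A.
Local Notation N := #|A|.

Lemma card_ring_gt0 : (0 < N)%N.
Proof. by apply/card_gt0P; exists 0. Qed.

Lemma mulrn_card (y : A) : y *+ N = 0.
Proof. by rewrite -zmodXgE -cardsT (expg_cardG (in_setT y)). Qed.

Lemma char_dvdn c : (1 : A) *+ c = 0 -> (N %| c)%N.
Proof.
have [g gen_g] := A_cyc; move=> c1.
have <- : #[g]%g = N.
  rewrite /order -cardsT; apply: eq_card => y; rewrite inE.
  by have [m ->] := gen_g y; rewrite -zmodXgE mem_cycle.
by rewrite order_dvdn zmodXgE -[g]mulr1 -mulrnAr c1 mulr0.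
Qed.

Lemma mulrn_unit_inj (v : A) : v \is a GRing.unit -> injective (fun e : 'I_N => v *+ e).
Proof.
move=> vU; suff le_eq (a b : 'I_N) : (a <= b)%N -> v *+ a = v *+ b -> a = b.
  move=> a b /=; case: (leqP a b) => [/le_eq //|/ltnW ba ab].
  exact/esym/le_eq.
move=> le_ab eq_ab; apply/val_inj/eqP; rewrite eqn_leq le_ab /=.
have dvd_ba : (N %| b - a)%N.
  apply: char_dvdn; apply: (mulrI vU).
  by rewrite mulr0 mulr_natr mulrnBr // eq_ab subrr.
case: (posnP (b - a)) => [ba0|/dvdn_leq/(_ dvd_ba) N_le_ba].
  by rewrite -subn_eq0 ba0.
by have := leq_trans N_le_ba (leq_subr a b); rewrite leqNgt ltn_ord.
Qed.

Lemma mulrn_unit_onto (v : A) : v \is a GRing.unit -> forall c, exists e : 'I_N, v *+ e = c.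
Proof.
move=> vU c; have := inj_card_onto (mulrn_unit_inj vU) (eq_leq (esym (card_ord N))) c.
by case/codomP => e ->; exists e.
Qed.

(* For a unit v, the unique e < N with v *+ e = c (see ncoefE), as a rational. *)
Definition ncoef (v c : A) : rat := \sum_(e : 'I_N | v *+ e == c) (val e)%:R.

Lemma ncoefE v c (e : 'I_N) : v \is a GRing.unit -> v *+ e = c -> ncoef v c = (val e)%:R.
Proof.
move=> vU vec; rewrite /ncoef (big_pred1 e) // => e' /=.
by apply/eqP/eqP => [ve'c|->//]; apply: (mulrn_unit_inj vU); rewrite /= ve'c.
Qed.

Lemma ncoef_subr v c : v \is a GRing.unit ->
  ncoef v (c - v) = ncoef v c - 1 + N%:R * (c == 0)%:R.
Proof.
move=> vU; have [e vec] := mulrn_unit_onto vU c; rewrite (ncoefE vU vec).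
have N_gt0 := card_ring_gt0.
case: (posnP e) => [e0|e_gt0].
  have c0 : c = 0 by rewrite -vec e0.
  have lt_N1 : (N.-1 < N)%N by rewrite prednK.
  have vN1 : v *+ (Ordinal lt_N1) = 0 - v.
    by apply/eqP; rewrite sub0r -subr_eq0 opprK -mulrSr prednK // mulrn_card.
  rewrite c0 (ncoefE vU vN1) eqxx /= e0 -subn1 natrB //.
  by rewrite mulr1 add0r addrC.
have lt_e1 : (e.-1 < N)%N by apply: leq_ltn_trans (leq_pred _) (ltn_ord e).
rewrite (@ncoefE _ _ (Ordinal lt_e1)) //=; last first.
  by rewrite -vec -[in RHS](prednK e_gt0) mulrSr addrK.
have /negbTE -> : c != 0.
  apply: contraTneq e_gt0 => c0.
  suff -> : e = Ordinal N_gt0 by [].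
  by apply: (mulrn_unit_inj vU); rewrite /= vec c0.
by rewrite -subn1 natrB // mulr0 addr0.
Qed.

End CyclicRing.

Section DifferenceEquation.
Variables (O : comNzRingType) (A : finComUnitRingType) (pi : {rmorphism O -> A}).
Hypothesis A_cyc : additively_cyclic A.
Variables (r : nat) (u : 'I_r -> O).
Hypothesis u_unit : forall j, pi (u j) \is a GRing.unit.
Local Notation N := #|A|.
Local Notation D := {ffun 'I_r -> 'I_N}.
Implicit Types (I : {set 'I_r}) (d : D) (a : A).

Definition supported I d := [forall j, (j \notin I) ==> (val (d j) == 0%N)].
Definition comb I d : A := \sum_(j in I) pi (u j) *+ val (d j).
Definition weight I d : rat := \prod_(j in I) (val (d j))%:R.
Definition sol_sum I a : rat := \sum_(d : D | supported I d && (comb I d == - a)) weight I d.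
Definition box_sum I : rat := \sum_(d : D | supported I d) weight I d.

Lemma frak_hE I a : frak_h pi u I a =
  if I == set0 then (if a == 0 then N%:R - 1 else -1)
  else (N%:R ^+ #|I|.-1)^-1 * sol_sum I a - ((N%:R - 1) / 2) ^+ #|I|.
Proof. by []. Qed.

Lemma supported_fupd I k d e : k \in I -> val (d k) == 0%N ->
  supported I (fupd d k e) = supported (I :\ k) d.
Proof.
move=> kI dk0; apply: eq_forallb => j; rewrite !inE.
by case: (eqVneq j k) => [->|jk]; rewrite ?fupd_same ?fupd_other ?kI.
Qed.

Lemma weight_fupd I k d e : k \in I -> weight I (fupd d k e) = (val e)%:R * weight (I :\ k) d.
Proof. exact: (big_fupd _ _ _ (fun _ e => (val e)%:R)). Qed.

Lemma comb_fupd I k d e : k \in I -> comb I (fupd d k e) = pi (u k) *+ val e + comb (I :\ k) d.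
Proof. exact: (big_fupd _ _ _ (fun j e => pi (u j) *+ val e)). Qed.

Lemma sum_supported_coord (V : nmodType) I k (F : D -> V) : k \in I ->
  \sum_(d | supported I d) F d = \sum_(d | supported (I :\ k) d) \sum_(e : 'I_N) F (fupd d k e).
Proof.
move=> kI; rewrite big_mkcond (sum_ffun_coord k) [RHS]big_mkcond /=.
rewrite [LHS]big_mkcond /=; apply: eq_bigr => d _.
case: (boolP (val (d k) == 0%N)) => [dk0|dk_neq0].
  by under eq_bigr => e _ do rewrite supported_fupd //; case: supported; rewrite // big1.
case: ifP => // /forallP/(_ k); rewrite !inE eqxx /=.
by move/negbTE: dk_neq0 => ->.
Qed.

Lemma box_sumE I : box_sum I = (N%:R * (N%:R - 1) / 2) ^+ #|I|.
Proof.
move nI: #|I| => n; elim: n I nI => [|n IHn] I nI.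
  rewrite (cards0_eq nI) /box_sum (sum_ffun0 (card_ring_gt0 A)) => [|d].
    by rewrite /weight big_set0.
  by apply: eq_forallb => j; rewrite inE.
have [k kI] : exists k, k \in I by apply/set0Pn; rewrite -card_gt0 nI.
have nIk : #|I :\ k| = n by move: nI; rewrite (cardsD1 k) kI => -[].
rewrite exprS -(IHn _ nIk) /box_sum (sum_supported_coord _ kI) mulr_sumr.
apply: eq_bigr => d _; rewrite -sum_ord_rat mulr_suml.
by apply: eq_bigr => e _; rewrite weight_fupd.
Qed.

Lemma sol_sum_coord I k a : k \in I -> sol_sum I a =
  \sum_(d | supported (I :\ k) d) ncoef (pi (u k)) (- a - comb (I :\ k) d) * weight (I :\ k) d.
Proof.
move=> kI; rewrite /sol_sum big_mkcondr (sum_supported_coord _ kI).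
apply: eq_bigr => d _; rewrite /ncoef mulr_suml [RHS]big_mkcond /=.
apply: eq_bigr => e _; rewrite comb_fupd // weight_fupd //.
by rewrite [_ == - a - _]eq_sym subr_eq eq_sym.
Qed.

Lemma sol_sum0 a : sol_sum set0 a = (a == 0)%:R.
Proof.
have comb0 d : comb set0 d = 0 by rewrite /comb big_set0.
case: (eqVneq a 0) => [->|a_neq0].
  rewrite /sol_sum (sum_ffun0 (card_ring_gt0 A)) => [|d]; first by rewrite /weight big_set0.
  by rewrite comb0 oppr0 eqxx andbT; apply: eq_forallb => j; rewrite inE.
by rewrite /sol_sum big_pred0 // => d; rewrite comb0 eq_sym oppr_eq0 (negbTE a_neq0) andbF.
Qed.

Lemma sol_sum_addu I k a : k \in I ->
  sol_sum I (a + pi (u k)) = sol_sum I a - box_sum (I :\ k) + N%:R * sol_sum (I :\ k) a.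
Proof.
move=> kI; rewrite !(sol_sum_coord _ kI) /box_sum /sol_sum big_mkcondr mulr_sumr.
rewrite -sumrB -big_split /=; apply: eq_bigr => d _.
rewrite opprD addrAC ncoef_subr // subr_eq0 eq_sym.
by case: eqP => _; rewrite /=; ring.
Qed.

Lemma frak_h_addu I k a : k \in I ->
  frak_h pi u I (a + pi (u k)) = frak_h pi u I a + frak_h pi u (I :\ k) a.
Proof.
move=> kI; have /negbTE I_neq0 : I != set0 by apply/set0Pn; exists k.
have cardI : #|I| = #|I :\ k|.+1 by rewrite (cardsD1 k I) kI.
rewrite !frak_hE I_neq0 cardI /= sol_sum_addu // box_sumE.
have N_neq0 : (N%:R : rat) != 0 by rewrite pnatr_eq0 -lt0n card_ring_gt0.
case: (eqVneq (I :\ k) set0) => [-> | /negbTE Ik_neq0].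
  by rewrite sol_sum0 cards0 expr0 invr1 !mul1r expr1; case: (a == 0) => /=; ring.
have [m ->] : exists m, #|I :\ k| = m.+1.
  by exists #|I :\ k|.-1; rewrite prednK // card_gt0 Ik_neq0.
rewrite /= !exprS !exprMn; field.
by rewrite expf_neq0 // N_neq0.
Qed.

End DifferenceEquation.

Section Telescoping.
Variables (A V : zmodType) (I : finType) (v : I -> A) (f : {set I} -> A -> V).
Hypothesis f_addv : forall (J : {set I}) k a, k \in J -> f J (a + v k) = f J a + f (J :\ k) a.

Lemma f_addvn (J : {set I}) k a n : k \in J ->
  f J (a + v k *+ n) = f J a + \sum_(e < n) f (J :\ k) (a + v k *+ e).
Proof.
move=> kJ; elim: n => [|n IHn]; first by rewrite big_ord0 mulr0n !addr0.
by rewrite big_ord_recr /= mulrSr addrA f_addv // IHn addrA.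
Qed.

Lemma sum_subsets_mem (K : {set I}) k (F : {set I} -> V) : k \in K ->
  \sum_(S : {set I} | (S \subset K) && (k \in S)) F S =
  \sum_(S : {set I} | S \subset K :\ k) F (k |: S).
Proof.
move=> kK; rewrite (reindex_onto (fun S => k |: S) (fun S => S :\ k)) /=; last first.
  by move=> S /andP[_ kS]; rewrite setD1K.
apply: eq_bigl => S; rewrite setU11 andbT subUset sub1set kK subsetD1 /=.
congr (_ && _); apply/eqP/idP => [<-|kS]; [by rewrite !inE eqxx | exact: setU1K].
Qed.

Variables (M : nat) (l : I -> nat).
Hypothesis M_gt0 : (0 < M)%N.
Hypothesis l_le : forall j, (l j <= M)%N.
Local Notation D := {ffun I -> 'I_M}.
Implicit Types (S : {set I}) (d : D).

Definition in_box (S : {set I}) (d : D) :=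
  [forall j, if j \in S then (val (d j) < l j)%N else (val (d j) == 0%N)].

Definition box_term (S : {set I}) (d : D) a :=
  f (~: S) (a + \sum_(j in S) v j *+ val (d j)).

Lemma in_box_fupd S k d e : k \notin S -> val (d k) == 0%N ->
  in_box (k |: S) (fupd d k e) = (val e < l k)%N && in_box S d.
Proof.
move=> kS dk0; apply/forallP/andP => [box_d|[el /forallP box_d] j].
  split; first by have := box_d k; rewrite setU11 fupd_same.
  apply/forallP => j; have := box_d j; rewrite !inE.
  case: (eqVneq j k) => [->|jk] /=; first by rewrite (negbTE kS).
  by rewrite fupd_other.
rewrite !inE; case: (eqVneq j k) => [->|jk] /=; first by rewrite fupd_same.
by rewrite fupd_other //; apply: box_d.
Qed.

Lemma box_term_fupd S k d e a : k \notin S ->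
  box_term (k |: S) (fupd d k e) a =
  f (~: S :\ k) (a + \sum_(j in S) v j *+ val (d j) + v k *+ val e).
Proof.
move=> kS; rewrite /box_term setCU setIC -setDE big_setU1 //= fupd_same.
rewrite [v k *+ _ + _]addrC addrA; congr (f _ (_ + _ + _)).
by apply: eq_bigr => j jS; rewrite fupd_other //; apply: contraNneq kS => <-.
Qed.

Lemma sum_box_setU1 S k a : k \notin S ->
  \sum_(d | in_box S d) \sum_(e < l k)
      f (~: S :\ k) (a + \sum_(j in S) v j *+ val (d j) + v k *+ e) =
  \sum_(d | in_box (k |: S) d) box_term (k |: S) d a.
Proof.
move=> kS; rewrite [RHS]big_mkcond (sum_ffun_coord k) [RHS]big_mkcond [LHS]big_mkcond /=.
apply: eq_bigr => d _; case: (boolP (val (d k) == 0%N)) => [dk0|dk_neq0]; last first.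
  case: ifP => // /forallP/(_ k); rewrite (negbTE kS).
  by move/negbTE: dk_neq0 => ->.
case box_d: (in_box S d); last by rewrite big1 // => e _; rewrite in_box_fupd // box_d andbF.
rewrite (big_ord_widen _ (fun e => f (~: S :\ k) (a + \sum_(j in S) v j *+ val (d j) + v k *+ e))
  (l_le k)) big_mkcond /=.
apply: eq_bigr => e _; rewrite in_box_fupd // box_d andbT.
by case: ifP => // _; rewrite box_term_fupd.
Qed.

Lemma f_add_box (K : {set I}) a :
  f setT (a + \sum_(j in K) v j *+ l j) =
  \sum_(S : {set I} | S \subset K) \sum_(d | in_box S d) box_term S d a.
Proof.
move nK: #|K| => n; elim: n K nK a => [|n IHn] K nK a.
  rewrite (cards0_eq nK) big_set0 addr0 (big_pred1 set0) => [|S]; last by rewrite subset0.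
  rewrite (sum_ffun0 M_gt0) => [|d]; last by apply: eq_forallb => j; rewrite inE.
  by rewrite /box_term setC0 big_set0 addr0.
have [k kK] : exists k, k \in K by apply/set0Pn; rewrite -card_gt0 nK.
have nKk : #|K :\ k| = n by move: nK; rewrite (cardsD1 k) kK => -[].
rewrite (big_setD1 k kK) /= addrA IHn //.
rewrite [RHS](bigID (fun S => k \in S)) /= [RHS]addrC sum_subsets_mem //.
rewrite [X in _ = X + _](eq_bigl (fun S => S \subset K :\ k)) => [|S]; last by rewrite subsetD1.
rewrite -big_split /=; apply: eq_bigr => S; rewrite subsetD1 => /andP[_ kS].
rewrite -sum_box_setU1 // -big_split /=; apply: eq_bigr => d _.
by rewrite /box_term addrAC (f_addvn _ _ (_ : k \in ~: S)) ?inE.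
Qed.

End Telescoping.

Theorem corollary2p2 (O : comNzRingType) (A : finComUnitRingType)
  (pi : {rmorphism O -> A})
  (pi_surj : forall a : A, exists y : O, pi y = a)
  (A_cyc : additively_cyclic A)
  (r : nat) (r_pos : (0 < r)%N) (u : 'I_r -> O) (u_inj : injective u)
  (u_unit : forall j, pi (u j) \is a GRing.unit)
  (x : A) (l : 'I_r -> nat) :
  frak_h pi u [set: 'I_r] (x + \sum_(j < r) pi (u j) *+ l j) =
  frak_h pi u [set: 'I_r] x +
  \sum_(S : {set 'I_r} | S != set0)
    \sum_(d : {ffun 'I_r -> 'I_(\sum_(j < r) l j)%N} |
            [forall j, if j \in S then (val (d j) < l j)%N else (val (d j) == 0%N)])
      frak_h pi u (~: S) (x + \sum_(j in S) pi (u j) *+ val (d j)).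
Proof.
(* The box bound M := sum_j l_j
   must be positive, so the degenerate case l = 0 is treated separately. *)
have l_le j : (l j <= \sum_(i < r) l i)%N by rewrite (bigD1 j) //= leq_addr.
have [l_sum0 | M_gt0] := posnP (\sum_(j < r) l j).
  have l0 j : l j = 0%N by apply/eqP; rewrite -leqn0 -l_sum0 l_le.
  rewrite big1 ?addr0 => [|j _]; last by rewrite l0.
  rewrite big1 ?addr0 // => S /set0Pn[j jS]; rewrite big_pred0 // => d.
  by apply/negbTE/forallP => /(_ j); rewrite jS l0.
have -> : \sum_(j < r) pi (u j) *+ l j = \sum_(j in [set: 'I_r]) pi (u j) *+ l j.
  by apply: eq_bigl => j; rewrite inE.
rewrite (f_add_box (frak_h_addu A_cyc u_unit) M_gt0 l_le) (bigD1 set0) ?sub0set //=.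
congr (_ + _); last by apply: eq_bigl => S; rewrite subsetT.
rewrite (sum_ffun0 M_gt0) => [|d]; last by apply: eq_forallb => j; rewrite inE.
by rewrite /box_term setC0 big_set0 addr0.
Qed.
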